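(* Let $p$ be a prime, $D$ the quaternion algebra over $\mathbb{Q}$ ramified exactly at $\{p,\infty\}$, $\mathcal{O}$ a maximal order, $U_1=\prod_q\mathrm{Stab}_{\mathrm{GU}_2(D_q)}(\mathcal{O}_q^2)\subset\mathrm{GU}_2(D_{\mathbb{A}_f})$ and $\Gamma^{(1)}=\mathrm{GU}_2(D)\cap U_1$. Then \[\Gamma^{(1)}=\mathrm{SU}_2(D)\cap\mathrm{GL}_2(\mathcal{O})=\mathrm{GU}_2(\mathcal{O}),\] where $\mathrm{GU}_2(\mathcal{O})=\{\gamma\in\mathrm{GU}_2(D)\cap M_2(\mathcal{O}):\mu(\gamma)\in\mathbb{Z}^\times\}$.
   Context: Quaternion conjugation $x\mapsto\overline{x}$; $\overline{g}^T$ is the transpose of the entrywise conjugate. $\mathrm{GU}_2(D)=\{g\in M_2(D): g\overline{g}^T=\mu(g)I,\ \mu(g)\in\mathbb{Q}^\times\}$, $\mathrm{SU}_2(D)$ its elements of similitude $1$. $\mathrm{GL}_2(\mathcal{O})$ is the group of matrices in $M_2(\mathcal{O})$ with inverse in $M_2(\mathcal{O})$. For each prime $q$, $D_q=D\otimes\mathbb{Q}_q$, $\mathcal{O}_q=\mathcal{O}\otimes\mathbb{Z}_q$, $\mathrm{GU}_2(D_q)$ defined analogously with $\mu\in\mathbb{Q}_q^\times$; $\mathrm{GU}_2(D_{\mathbb{A}_f})$ is the restricted product of the $\mathrm{GU}_2(D_q)$ with respect to $\mathrm{GU}_2(D_q)\cap\mathrm{GL}_2(\mathcal{O}_q)$,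 with $\mathrm{GU}_2(D)$ embedded diagonally. $\mathcal{O}_q^2$ consists of row vectors, with stabilizer taken under right multiplication. *)

From mathcomp Require Import all_boot all_order all_algebra.
Set Implicit Arguments. Unset Strict Implicit. Unset Printing Implicit Defensive.
Import Order.TTheory GRing.Theory Num.Theory.
Local Open Scope ring_scope.

(* Elements x0 + x1 i + x2 j + x3 k stored as row vectors in Q^4,
   with i^2 = a, j^2 = b, k = ij = -ji (a, b nonzero rationals).
   Every quaternion algebra over Q is of this form. *)
Definition quat := 'rV[rat]_4.

Definition qc (x : quat) (k : nat) : rat := x ord0 (inord k).

Definition mkQ (x0 x1 x2 x3 : rat) : quat :=
  \row_(i < 4) nth 0 [:: x0; x1; x2; x3] i.

Definition qmul (a b : rat) (x y : quat) : quat :=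
  let x0 := qc x 0%N in let x1 := qc x 1%N in let x2 := qc x 2%N in let x3 := qc x 3%N in
  let y0 := qc y 0%N in let y1 := qc y 1%N in let y2 := qc y 2%N in let y3 := qc y 3%N in
  mkQ (x0 * y0 + a * x1 * y1 + b * x2 * y2 - a * b * x3 * y3)
      (x0 * y1 + x1 * y0 - b * x2 * y3 + b * x3 * y2)
      (x0 * y2 + x2 * y0 + a * x1 * y3 - a * x3 * y1)
      (x0 * y3 + x3 * y0 + x1 * y2 - x2 * y1).

Definition qconj (x : quat) : quat :=
  mkQ (qc x 0%N) (- qc x 1%N) (- qc x 2%N) (- qc x 3%N).

Definition qscal (r : rat) : quat := mkQ r 0 0 0.

(* D ramified at infinity iff D (x) R is Hamilton's quaternions iff a<0 and b<0. *)
Definition ramified_at_infty (a b : rat) : Prop := a < 0 /\ b < 0.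

(* D splits at the prime q iff the norm form of the pure part, i.e. the ternary
   form z^2 = a x^2 + b y^2, has a nontrivial zero over Q_q; after clearing
   denominators, equivalently (compactness of Z_q) a primitive zero modulo
   q^k for every k. *)
Definition split_at (a b : rat) (q : nat) : Prop :=
  let A := numq a * denq b in
  let B := numq b * denq a in
  let C := denq a * denq b in
  forall k : nat, exists x y z : int,
    ~~ [&& (q%:Z %| x)%Z, (q%:Z %| y)%Z & (q%:Z %| z)%Z] /\
    (((q ^ k)%N)%:Z %| A * x ^+ 2 + B * y ^+ 2 - C * z ^+ 2)%Z.

Definition ramified_at (a b : rat) (q : nat) : Prop := ~ split_at a b q.

Definition ramified_exactly_at_p_infty (a b : rat) (p : nat) : Prop :=
  ramified_at_infty a b /\ ramified_at a b p /\
  (forall q : nat, prime q -> q <> p -> ~ ramified_at a b q).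

Definition in_lattice (B : 'I_4 -> quat) (x : quat) : Prop :=
  exists c : 'I_4 -> int, x = \sum_(i < 4) (c i)%:~R *: B i.

(* an order: a full Z-lattice in D (basis Q-linearly independent) that is a
   subring containing 1 *)
Definition is_order (a b : rat) (B : 'I_4 -> quat) : Prop :=
  \det (\matrix_(i < 4, j < 4) B i ord0 j) != 0 /\
  in_lattice B (qscal 1) /\
  (forall x y, in_lattice B x -> in_lattice B y -> in_lattice B (qmul a b x y)).

Definition is_maximal_order (a b : rat) (B : 'I_4 -> quat) : Prop :=
  is_order a b B /\
  forall B' : 'I_4 -> quat, is_order a b B' ->
    (forall x, in_lattice B x -> in_lattice B' x) ->
    forall x, in_lattice B' x -> in_lattice B x.

(* O_(q) = O (x) Z_(q) = D cap O_q : elements with a denominator prime to q *)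
Definition loc_at (B : 'I_4 -> quat) (q : nat) (x : quat) : Prop :=
  exists d : nat, (0 < d)%N /\ ~~ (q %| d)%N /\ in_lattice B (d%:R *: x).

Definition M2 := 'I_2 -> 'I_2 -> quat.

Definition mmul (a b : rat) (g h : M2) : M2 :=
  fun i j => \sum_(k < 2) qmul a b (g i k) (h k j).

Definition conjT (g : M2) : M2 := fun i j => qconj (g j i).

Definition scalM (r : rat) : M2 := fun i j => if i == j then qscal r else 0.

Definition meq (g h : M2) : Prop := forall i j, g i j = h i j.

Definition simil (a b : rat) (g : M2) (mu : rat) : Prop :=
  meq (mmul a b g (conjT g)) (scalM mu).

Definition in_GU2 (a b : rat) (g : M2) : Prop :=
  exists mu : rat, mu != 0 /\ simil a b g mu.

Definition in_SU2 (a b : rat) (g : M2) : Prop := simil a b g 1.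

Definition in_M2O (B : 'I_4 -> quat) (g : M2) : Prop :=
  forall i j, in_lattice B (g i j).

Definition in_GL2O (a b : rat) (B : 'I_4 -> quat) (g : M2) : Prop :=
  in_M2O B g /\ exists h : M2, in_M2O B h /\
    meq (mmul a b g h) (scalM 1) /\ meq (mmul a b h g) (scalM 1).

Definition in_GU2O (a b : rat) (B : 'I_4 -> quat) (g : M2) : Prop :=
  in_GU2 a b g /\ in_M2O B g /\
  exists mu : rat, simil a b g mu /\ (mu = 1 \/ mu = -1).

(* row vectors, right action *)
Definition vmul (a b : rat) (v : 'I_2 -> quat) (g : M2) : 'I_2 -> quat :=
  fun j => \sum_(k < 2) qmul a b (v k) (g k j).

Definition stab_loc (a b : rat) (B : 'I_4 -> quat) (q : nat) (g : M2) : Prop :=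
  (forall v : 'I_2 -> quat, (forall i, loc_at B q (v i)) ->
      forall j, loc_at B q (vmul a b v g j)) /\
  (forall w : 'I_2 -> quat, (forall i, loc_at B q (w i)) ->
      exists v : 'I_2 -> quat, (forall i, loc_at B q (v i)) /\
        forall j, vmul a b v g j = w j).

(* Gamma^(1) = GU_2(D) cap U_1 (GU_2(D) embedded diagonally) *)
Definition in_Gamma1 (a b : rat) (B : 'I_4 -> quat) (g : M2) : Prop :=
  in_GU2 a b g /\ forall q : nat, prime q -> stab_loc a b B q g.

From mathcomp Require Import all_boot all_order all_algebra.
From mathcomp Require Import ring lra zify.
Set Implicit Arguments. Unset Strict Implicit. Unset Printing Implicit Defensive.
Import Order.TTheory GRing.Theory Num.Theory.
Local Open Scope ring_scope.

(* Since D is ramified at infinity, its reduced norm is positive definite, so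
   g conj(g)^T = mu I forces mu > 0 and makes conj(g)^T an inverse of g up to
   mu.  An element of an order is integral, so its reduced trace and norm are
   integers (here via the determinant and trace of left multiplication), and
   an order is stable under conjugation.  Integrality at every prime is
   global integrality, so g in Gamma^(1) and its inverse mu^-1 conj(g)^T lie in
   M_2(O); then mu and mu^-1 are positive integers, i.e. mu = 1.  Conversely
   an element of SU_2(D) with entries in O has inverse conj(g)^T in M_2(O);
   and mu = -1 is excluded by positivity. *)

Lemma det_mx33 (R : comPzRingType) (M : 'M[R]_3) :
  let m (i j : nat) := M (inord i) (inord j) in
  \det M = m 0%N 0%N * (m 1%N 1%N * m 2%N 2%N - m 1%N 2%N * m 2%N 1%N)
          - m 0%N 1%N * (m 1%N 0%N * m 2%N 2%N - m 1%N 2%N * m 2%N 0%N)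
          + m 0%N 2%N * (m 1%N 0%N * m 2%N 1%N - m 1%N 1%N * m 2%N 0%N).
Proof.
move=> m; rewrite {1}(_ : M = \matrix_(i < 3, j < 3) m i j); last first.
  by apply/matrixP => i j; rewrite mxE /m !inord_val.
rewrite (expand_det_row _ ord0) !big_ord_recr big_ord0 /cofactor.
rewrite !(expand_det_row _ ord0) !big_ord_recr !big_ord0 /cofactor.
by rewrite !det_mx11 !mxE /=; ring.
Qed.

Section Quaternion.
Variables a b : rat.

Lemma qc_mkQ0 x0 x1 x2 x3 : qc (mkQ x0 x1 x2 x3) 0 = x0.
Proof. by rewrite /qc /mkQ mxE inordK. Qed.
Lemma qc_mkQ1 x0 x1 x2 x3 : qc (mkQ x0 x1 x2 x3) 1 = x1.
Proof. by rewrite /qc /mkQ mxE inordK. Qed.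
Lemma qc_mkQ2 x0 x1 x2 x3 : qc (mkQ x0 x1 x2 x3) 2 = x2.
Proof. by rewrite /qc /mkQ mxE inordK. Qed.
Lemma qc_mkQ3 x0 x1 x2 x3 : qc (mkQ x0 x1 x2 x3) 3 = x3.
Proof. by rewrite /qc /mkQ mxE inordK. Qed.

Lemma quatP (x y : quat) : qc x 0 = qc y 0 -> qc x 1 = qc y 1 ->
  qc x 2 = qc y 2 -> qc x 3 = qc y 3 -> x = y.
Proof.
move=> h0 h1 h2 h3; apply/rowP => i; rewrite -(inord_val i).
by case: i => [[|[|[|[|k]]]] //= _].
Qed.

Lemma qcD x y k : qc (x + y) k = qc x k + qc y k.
Proof. by rewrite /qc mxE. Qed.
Lemma qcN x k : qc (- x) k = - qc x k.
Proof. by rewrite /qc mxE. Qed.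
Lemma qcZ r x k : qc (r *: x) k = r * qc x k.
Proof. by rewrite /qc mxE. Qed.
Lemma qc0 k : qc 0 k = 0.
Proof. by rewrite /qc mxE. Qed.

Definition qcE := (qc_mkQ0, qc_mkQ1, qc_mkQ2, qc_mkQ3, qcD, qcN, qcZ, qc0).

Local Ltac qsolve := apply: quatP; rewrite /qmul /qconj /qscal ?qcE; ring.

Lemma qmulDl x y z : qmul a b (x + y) z = qmul a b x z + qmul a b y z.
Proof. qsolve. Qed.
Lemma qmulDr x y z : qmul a b x (y + z) = qmul a b x y + qmul a b x z.
Proof. qsolve. Qed.
Lemma qmulZl r x y : qmul a b (r *: x) y = r *: qmul a b x y.
Proof. qsolve. Qed.
Lemma qmul0l y : qmul a b 0 y = 0.
Proof. qsolve. Qed.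
Lemma qmul0r y : qmul a b y 0 = 0.
Proof. qsolve. Qed.
Lemma qmulA x y z : qmul a b x (qmul a b y z) = qmul a b (qmul a b x y) z.
Proof. qsolve. Qed.
Lemma qmul_scall r x : qmul a b (qscal r) x = r *: x.
Proof. qsolve. Qed.
Lemma qmul_scalr r x : qmul a b x (qscal r) = r *: x.
Proof. qsolve. Qed.

Lemma qconjM x y : qconj (qmul a b x y) = qmul a b (qconj y) (qconj x).
Proof. qsolve. Qed.
Lemma qconjD x y : qconj (x + y) = qconj x + qconj y.
Proof. qsolve. Qed.
Lemma qconjK x : qconj (qconj x) = x.
Proof. qsolve. Qed.
Lemma qconj0 : qconj 0 = 0.
Proof. qsolve. Qed.
Lemma qconjE x : qconj x = (2 * qc x 0) *: qscal 1 - x.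
Proof. qsolve. Qed.

Lemma qc_qscal r : qc (qscal r) 0 = r.
Proof. by rewrite /qscal qcE. Qed.
Lemma qscalD r s : qscal r + qscal s = qscal (r + s).
Proof. qsolve. Qed.
Lemma qscal_inj : injective qscal.
Proof. by move=> r s /(congr1 (qc^~ 0%N)); rewrite !qc_qscal. Qed.

Definition qnorm (x : quat) : rat :=
  qc x 0 ^+ 2 - a * qc x 1 ^+ 2 - b * qc x 2 ^+ 2 + a * b * qc x 3 ^+ 2.

Lemma qmul_conj x : qmul a b x (qconj x) = qscal (qnorm x).
Proof. rewrite /qnorm; qsolve. Qed.
Lemma qmul_conjl x : qmul a b (qconj x) x = qscal (qnorm x).
Proof. rewrite /qnorm; qsolve. Qed.

Lemma qnormM x y : qnorm (qmul a b x y) = qnorm x * qnorm y.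
Proof. rewrite /qnorm /qmul !qcE; ring. Qed.
Lemma qnormZ r x : qnorm (r *: x) = r ^+ 2 * qnorm x.
Proof. rewrite /qnorm !qcE; ring. Qed.
Lemma qnormN x : qnorm (- x) = qnorm x.
Proof. rewrite /qnorm !qcE; ring. Qed.
Lemma qnorm_conj x : qnorm (qconj x) = qnorm x.
Proof. rewrite /qnorm /qconj !qcE; ring. Qed.
Lemma qc_qmul_sqr x : qc (qmul a b x x) 0 = 2 * qc x 0 ^+ 2 - qnorm x.
Proof. rewrite /qnorm /qmul !qcE; ring. Qed.

Section Definite.
Hypotheses (a_lt0 : a < 0) (b_lt0 : b < 0).

Lemma qnorm_sum_sqr x : qnorm x =
  qc x 0 ^+ 2 + (- a) * qc x 1 ^+ 2 + (- b) * qc x 2 ^+ 2 + a * b * qc x 3 ^+ 2.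
Proof. rewrite /qnorm; ring. Qed.

Lemma qnorm_coef_ge0 : [/\ 0 <= - a, 0 <= - b & 0 <= a * b].
Proof. by rewrite !oppr_ge0 !ltW // nmulr_rgt0. Qed.

Lemma qnorm_ge0 x : 0 <= qnorm x.
Proof.
have [na nb ab] := qnorm_coef_ge0.
rewrite qnorm_sum_sqr; do !apply: addr_ge0.
all: first [exact: sqr_ge0 | exact: mulr_ge0 _ (sqr_ge0 _)].
Qed.

Lemma qnorm_eq0 x : qnorm x = 0 -> x = 0.
Proof.
have [na nb ab] := qnorm_coef_ge0.
have s0 := sqr_ge0 (qc x 0).
have s1 : 0 <= - a * qc x 1 ^+ 2 := mulr_ge0 na (sqr_ge0 _).
have s2 : 0 <= - b * qc x 2 ^+ 2 := mulr_ge0 nb (sqr_ge0 _).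
have s3 : 0 <= a * b * qc x 3 ^+ 2 := mulr_ge0 ab (sqr_ge0 _).
rewrite qnorm_sum_sqr => n0.
have /eqP e0 : qc x 0 ^+ 2 = 0 by lra.
have /eqP e1 : - a * qc x 1 ^+ 2 = 0 by lra.
have /eqP e2 : - b * qc x 2 ^+ 2 = 0 by lra.
have /eqP e3 : a * b * qc x 3 ^+ 2 = 0 by lra.
move: e0 e1 e2 e3; rewrite !mulf_eq0 !orbb !oppr_eq0 (lt_eqF a_lt0) (lt_eqF b_lt0) /=.
by move=> /eqP e0 /eqP e1 /eqP e2 /eqP e3; apply: quatP; rewrite qc0.
Qed.

End Definite.

Definition lmul_coef_mx (x0 x1 x2 x3 : rat) : 'M[rat]_4 :=
  \matrix_(i < 4, j < 4) nth 0 (nth [::] [::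
    [:: x0; x1; x2; x3];
    [:: a * x1; x0; - a * x3; - x2];
    [:: b * x2; b * x3; x0; x1];
    [:: - a * b * x3; - b * x2; a * x1; x0]] i) j.

Definition lmul_mx (x : quat) : 'M[rat]_4 :=
  lmul_coef_mx (qc x 0) (qc x 1) (qc x 2) (qc x 3).

Lemma det_lmul_coef_mx x0 x1 x2 x3 : \det (lmul_coef_mx x0 x1 x2 x3) =
  (x0 ^+ 2 - a * x1 ^+ 2 - b * x2 ^+ 2 + a * b * x3 ^+ 2) ^+ 2.
Proof.
rewrite (expand_det_row _ ord0) !big_ord_recr big_ord0 /cofactor.
by rewrite !det_mx33 !mxE /= !inordK //=; ring.
Qed.

Lemma det_lmul_mx x : \det (lmul_mx x) = qnorm x ^+ 2.
Proof. exact: det_lmul_coef_mx. Qed.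

Lemma trace_lmul_mx x : \tr (lmul_mx x) = 4 * qc x 0.
Proof.
rewrite /mxtrace !big_ord_recl big_ord0 !mxE /=; ring.
Qed.

Lemma qc_mulmx (v : quat) (M : 'M_4) k :
  qc (v *m M) k = \sum_(i < 4) qc v i * M (inord i) (inord k).
Proof. by rewrite /qc mxE; apply: eq_bigr => i _; rewrite inord_val. Qed.

Lemma mul_lmul_mx (v : quat) x : v *m lmul_mx x = qmul a b x v.
Proof.
apply: quatP; rewrite !qc_mulmx !big_ord_recl big_ord0 !mxE !inordK //=.
all: by rewrite /bump /= /qmul !qcE; ring.
Qed.

End Quaternion.

Lemma Qint_sqr (s : rat) : s ^+ 2 \is a Num.int -> s \is a Num.int.
Proof.
case/intrP => z hz; rewrite Qint_def.
have num_sqr : numq s ^+ 2 = z * denq s ^+ 2.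
  by apply: (@intr_inj rat); rewrite !expr2 !intrM numqE -hz; ring.
have cop := coprime_num_den s.
have den_dvd1 : (`|denq s| ^ 2 %| 1)%N.
  rewrite -[X in (_ %| X)%N](eqP (coprimeXr 2 (coprimeXl 2 cop))) dvdn_gcd dvdnn andbT.
  by apply/dvdnP; exists `|z|%N; rewrite -!abszX num_sqr abszM.
have den1 : `|denq s|%N = 1%N.
  by apply/eqP; rewrite -dvdn1 (dvdn_trans _ den_dvd1) // dvdn_exp.
by apply/eqP; rewrite -(gtr0_norm (denq_gt0 s)) -abszE den1.
Qed.

Lemma dvdz2_sqr (v : int) : (2 %| v * v)%Z -> (2 %| v)%Z.
Proof. by rewrite !dvdzE abszM Euclid_dvdM // orbb. Qed.

Lemma Qint_of_double_sqr (w : rat) :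
  2 * w \is a Num.int -> 2 * w ^+ 2 \is a Num.int -> w \is a Num.int.
Proof.
case/intrP => v hv; case/intrP => y hy.
have /dvdz2_sqr/dvdzP [k hk] : (2 %| v * v)%Z.
  by apply/dvdzP; exists y; apply: (@intr_inj rat); rewrite !intrM -hv -hy; ring.
apply/intrP; exists k; apply: (mulfI (isT : (2 : rat) != 0)).
by rewrite hv hk intrM mulrC.
Qed.

Section Lattice.
Variable B : 'I_4 -> quat.

Lemma lattice0 : in_lattice B 0.
Proof. by exists (fun=> 0); rewrite big1 // => i _; rewrite scale0r. Qed.

Lemma latticeD x y : in_lattice B x -> in_lattice B y -> in_lattice B (x + y).
Proof.
move=> [c ->] [d ->]; exists (fun i => c i + d i); rewrite -big_split /=.
by apply: eq_bigr => i _; rewrite intrD scalerDl.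
Qed.

Lemma latticeZ (z : int) x : in_lattice B x -> in_lattice B (z%:~R *: x).
Proof.
move=> [c ->]; exists (fun i => z * c i); rewrite scaler_sumr.
by apply: eq_bigr => i _; rewrite intrM scalerA.
Qed.

Lemma latticeB x y : in_lattice B x -> in_lattice B y -> in_lattice B (x - y).
Proof.
by move=> hx hy; rewrite -scaleN1r; apply: latticeD => //; apply: (latticeZ (-1)).
Qed.

Lemma lattice_basis i : in_lattice B (B i).
Proof.
exists (fun j => (j == i)%:Z); rewrite (bigD1 i) //= big1 ?addr0 ?eqxx ?scale1r //.
by move=> j /negbTE ->; rewrite scale0r.
Qed.

Lemma loc_lattice q x : prime q -> in_lattice B x -> loc_at B q x.
Proof.
move=> q_pr hx; exists 1%N; rewrite dvdn1 scale1r; split => //; split => //.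
by apply: contraL q_pr => /eqP ->.
Qed.

Lemma locD q x y : prime q -> loc_at B q x -> loc_at B q y -> loc_at B q (x + y).
Proof.
move=> q_pr [d [d_gt0 [qNd hd]]] [e [e_gt0 [qNe he]]].
exists (d * e)%N; split; first by rewrite muln_gt0 d_gt0.
split; first by rewrite Euclid_dvdM // negb_or qNd.
have -> : (d * e)%:R *: (x + y) = e%:R *: (d%:R *: x) + d%:R *: (e%:R *: y).
  by rewrite !scalerA natrM scalerDr mulrC.
by apply: latticeD; apply: (latticeZ _%:Z).
Qed.

(* The n > 0 with n x in the lattice are closed under gcd (Bezout), and for
   every prime q some of them are prime to q; so 1 is one of them. *)
Lemma lattice_of_loc x : (forall q, prime q -> loc_at B q x) -> in_lattice B x.
Proof.
move=> x_loc; have [d [d_gt0 [_ hd]]] := x_loc 2%N isT.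
elim/ltn_ind: d d_gt0 hd => n IH n_gt0 hn.
have [n_gt1|n_le1] := ltnP 1 n; last first.
  have n1 : n = 1%N by lia.
  by rewrite n1 scale1r in hn.
have [e [e_gt0 [pNe he]]] := x_loc _ (pdiv_prime n_gt1).
have [u [v uv]] := Bezoutz n e.
apply: (IH (gcdn n e)).
- rewrite ltn_neqAle dvdn_leq ?dvdn_gcdl // andbT; apply: contra pNe => /eqP gcd_n.
  by rewrite (dvdn_trans (pdiv_dvd n)) // -gcd_n dvdn_gcdr.
- by rewrite gcdn_gt0 n_gt0.
have -> : (gcdn n e)%:R *: x = u%:~R *: (n%:R *: x) + v%:~R *: (e%:R *: x).
  by rewrite !scalerA -scalerDl -[(gcdn n e)%:R]/((gcdz n e)%:~R) -uv intrD !intrM.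
by apply: latticeD; apply: latticeZ.
Qed.

Definition basis_mx : 'M[rat]_4 := \matrix_(i < 4, j < 4) B i ord0 j.

Lemma row_basis_mx i : row i basis_mx = B i.
Proof. by apply/rowP => j; rewrite !mxE (ord1 ord0). Qed.

(* An order is a Z-lattice stable under left multiplication by its elements,
   so the matrix of this multiplication is conjugate to an integer matrix. *)
Lemma lmul_mx_int a b x : is_order a b B -> in_lattice B x ->
  \det (lmul_mx a b x) \is a Num.int /\ \tr (lmul_mx a b x) \is a Num.int.
Proof.
move=> [det_neq0 [_ closedM]] hx.
have /fin_all_exists [c hc] : forall i, exists c : 'I_4 -> int,
    qmul a b x (B i) = \sum_(j < 4) (c j)%:~R *: B j.
  by move=> i; apply: closedM => //; apply: lattice_basis.
pose C : 'M[rat]_4 := map_mx intr (\matrix_(i, j) c i j).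
have conjC : basis_mx *m lmul_mx a b x = C *m basis_mx.
  apply/row_matrixP => i; rewrite !row_mul row_basis_mx mul_lmul_mx hc mulmx_sum_row.
  by apply: eq_bigr => j _; rewrite row_basis_mx !mxE.
have basis_unit : basis_mx \in unitmx by rewrite unitmxE unitfE.
split.
  have : \det basis_mx * \det (lmul_mx a b x) = \det C * \det basis_mx.
    by rewrite -!det_mulmx conjC.
  by rewrite mulrC => /(mulIf det_neq0) ->; rewrite det_map_mx rpred_int.
have -> : lmul_mx a b x = invmx basis_mx *m (C *m basis_mx) by rewrite -conjC mulKmx.
rewrite mxtrace_mulC -mulmxA mulmxV // mulmx1 /mxtrace.
by apply: rpred_sum => i _; rewrite mxE rpred_int.
Qed.

End Lattice.

Section Order.
Variables (a b : rat) (B : 'I_4 -> quat).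
Hypothesis B_order : is_order a b B.

Lemma order1 : in_lattice B (qscal 1).
Proof. by case: B_order => _ []. Qed.

Lemma orderM x y : in_lattice B x -> in_lattice B y -> in_lattice B (qmul a b x y).
Proof. by case: B_order => _ [] _; apply. Qed.

(* tr (lmul x) = 4 x0 and tr (lmul x^2) = 4 (2 x0^2 - N x) make both 2 (2 x0)
   and 2 (2 x0)^2 integral once N x = sqrt (det (lmul x)) is. *)
Lemma order_trace_norm_int x : in_lattice B x ->
  2 * qc x 0 \is a Num.int /\ qnorm a b x \is a Num.int.
Proof.
move=> hx.
have [det_int tr_int] := lmul_mx_int B_order hx.
have [_ tr_sqr_int] := lmul_mx_int B_order (orderM hx hx).
rewrite det_lmul_mx in det_int; rewrite trace_lmul_mx in tr_int.
rewrite trace_lmul_mx qc_qmul_sqr in tr_sqr_int.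
have norm_int := Qint_sqr det_int.
split => //; apply: Qint_of_double_sqr.
  by rewrite mulrA -[2 * 2]/(4 : rat).
have -> : 2 * (2 * qc x 0) ^+ 2 = 4 * (2 * qc x 0 ^+ 2 - qnorm a b x) + 4 * qnorm a b x.
  by ring.
by rewrite rpredD // rpredM.
Qed.

Lemma order_conj x : in_lattice B x -> in_lattice B (qconj x).
Proof.
move=> hx; rewrite qconjE; have [/intrP [z ->] _] := order_trace_norm_int hx.
by apply: latticeB => //; apply: latticeZ; apply: order1.
Qed.

Lemma locMl q x y : loc_at B q x -> in_lattice B y -> loc_at B q (qmul a b x y).
Proof.
move=> [d [d_gt0 [qNd hd]]] hy; exists d; split => //; split => //.
by rewrite -qmulZl; apply: orderM.
Qed.

End Order.

Lemma Qint_gt0_ge1 (r : rat) : 0 < r -> r \is a Num.int -> 1 <= r.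
Proof.
by move=> r_gt0 /intrP [z def_r]; move: r_gt0; rewrite def_r ltr0z ler1z gtz0_ge1.
Qed.

Lemma Qint_unit_gt0 (r : rat) :
  0 < r -> r \is a Num.int -> r^-1 \is a Num.int -> r = 1.
Proof.
move=> r_gt0 r_int rV_int; apply: le_anti; rewrite Qint_gt0_ge1 // andbT.
by rewrite -invf_ge1 // Qint_gt0_ge1 // invr_gt0.
Qed.

Lemma big_ord2 (V : nmodType) (F : 'I_2 -> V) : \sum_(k < 2) F k = F ord0 + F ord_max.
Proof. by rewrite big_ord_recr big_ord1 /=; congr (F _ + _); apply: val_inj. Qed.

Lemma ord2P (i : 'I_2) : i = ord0 \/ i = ord_max.
Proof. by case: i => [[|[|k]] lt_i2]; [left|right|]; try apply: val_inj. Qed.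

Section Matrix2.
Variables a b : rat.

Lemma mmulA g h m i j :
  mmul a b (mmul a b g h) m i j = mmul a b g (mmul a b h m) i j.
Proof. by rewrite /mmul !big_ord2 !qmulDl !qmulDr !qmulA addrACA. Qed.

Lemma vmulA v g h j : vmul a b (vmul a b v g) h j = vmul a b v (mmul a b g h) j.
Proof. by rewrite /vmul /mmul !big_ord2 !qmulDl !qmulDr !qmulA addrACA. Qed.

Lemma eq_mmull g g' h : meq g g' -> meq (mmul a b g h) (mmul a b g' h).
Proof. by move=> eq_g i j; apply: eq_bigr => k _; rewrite eq_g. Qed.

Lemma eq_mmulr g h h' : meq h h' -> meq (mmul a b g h) (mmul a b g h').
Proof. by move=> eq_h i j; apply: eq_bigr => k _; rewrite eq_h. Qed.

Lemma eq_vmull v v' : (forall k, v k = v' k) ->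
  forall g j, vmul a b v g j = vmul a b v' g j.
Proof. by move=> eq_v g j; apply: eq_bigr => k _; rewrite eq_v. Qed.

Lemma eq_vmulr v g g' : meq g g' -> forall j, vmul a b v g j = vmul a b v g' j.
Proof. by move=> eq_g j; apply: eq_bigr => k _; rewrite eq_g. Qed.

Lemma mmul_scall r g i j : mmul a b (scalM r) g i j = r *: g i j.
Proof.
rewrite /mmul big_ord2 /scalM.
by case: (ord2P i) => ->; rewrite /= ?qmul0l qmul_scall ?addr0 ?add0r.
Qed.

Lemma vmul_scalr v r j : vmul a b v (scalM r) j = r *: v j.
Proof.
rewrite /vmul big_ord2 /scalM.
by case: (ord2P j) => ->; rewrite /= ?qmul0r qmul_scalr ?addr0 ?add0r.
Qed.

Definition unit_row (i : 'I_2) : 'I_2 -> quat :=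
  fun k => if k == i then qscal 1 else 0.

Lemma vmul_unit_row i g j : vmul a b (unit_row i) g j = g i j.
Proof.
rewrite /vmul big_ord2 /unit_row.
by case: (ord2P i) => ->; rewrite /= ?qmul0l qmul_scall scale1r ?addr0 ?add0r.
Qed.

Lemma similE g mu i j : simil a b g mu ->
  \sum_(k < 2) qmul a b (g i k) (qconj (g j k)) = scalM mu i j.
Proof. by move=> g_mu; rewrite -g_mu. Qed.

Lemma simil_norm_row0 g mu : simil a b g mu ->
  mu = qnorm a b (g ord0 ord0) + qnorm a b (g ord0 ord_max).
Proof.
move/(similE ord0 ord0); rewrite big_ord2 !qmul_conj qscalD /scalM eqxx.
by move/qscal_inj.
Qed.

(* X := conj(g)^T g is idempotent because g X = g; comparing the norms of the
   entries of g gives X00 = 1, and X10 = conj X01, so 1 + N(X01) = 1. *)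
Lemma SU2_conjT_mul g : a < 0 -> b < 0 ->
  in_SU2 a b g -> meq (mmul a b (conjT g) g) (scalM 1).
Proof.
move=> a_lt0 b_lt0 g_su.
have E00 := similE ord0 ord0 g_su; have E11 := similE ord_max ord_max g_su.
have E01 := similE ord0 ord_max g_su.
rewrite big_ord2 !qmul_conj /scalM /= qscalD in E00.
rewrite big_ord2 !qmul_conj /scalM /= qscalD in E11.
rewrite big_ord2 /scalM /= in E01.
move/qscal_inj: E00 => E00; move/qscal_inj: E11 => E11.
set g00 := g ord0 ord0 in E00 E01 *; set g01 := g ord0 ord_max in E00 E01 *.
set g10 := g ord_max ord0 in E11 E01 *; set g11 := g ord_max ord_max in E11 E01 *.
have norm_prod : qnorm a b g00 * qnorm a b g10 = qnorm a b g01 * qnorm a b g11.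
  have E01' : qmul a b g00 (qconj g10) = - qmul a b g01 (qconj g11).
    by apply/eqP; rewrite -subr_eq0 opprK E01.
  by move/(congr1 (qnorm a b)): E01'; rewrite qnormN !qnormM !qnorm_conj.
have col0 : qnorm a b g00 + qnorm a b g10 = 1 by nra.
have col1 : qnorm a b g01 + qnorm a b g11 = 1 by nra.
pose X := mmul a b (conjT g) g.
have X00 : X ord0 ord0 = qscal 1.
  by rewrite /X /mmul big_ord2 /conjT !qmul_conjl qscalD col0.
have X11 : X ord_max ord_max = qscal 1.
  by rewrite /X /mmul big_ord2 /conjT !qmul_conjl qscalD col1.
have X10 : X ord_max ord0 = qconj (X ord0 ord_max).
  by rewrite /X /mmul !big_ord2 /conjT qconjD !qconjM !qconjK.
have gX : meq (mmul a b g X) g.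
  by move=> i j; rewrite /X -mmulA (eq_mmull _ g_su) mmul_scall scale1r.
have XX : meq (mmul a b X X) X.
  by move=> i j; rewrite {1}/X mmulA (eq_mmulr _ gX).
have X01 : X ord0 ord_max = 0.
  have := XX ord0 ord0; rewrite {1}/mmul big_ord2 X00 X10 qmul_scall scale1r qmul_conj.
  move/(congr1 (qc^~ 0%N)); rewrite qcD !qc_qscal => norm_X01.
  by apply: (qnorm_eq0 a_lt0 b_lt0); lra.
move=> i j; rewrite -/X.
by case: (ord2P i) => ->; case: (ord2P j) => ->; rewrite ?X10 ?X00 ?X01 ?X11 ?qconj0.
Qed.

End Matrix2.

Section Unitary.
Variables (a b : rat) (B : 'I_4 -> quat).
Hypotheses (a_lt0 : a < 0) (b_lt0 : b < 0) (B_order : is_order a b B).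

Lemma GL2O_of_SU2 g : in_M2O B g -> in_SU2 a b g -> in_GL2O a b B g.
Proof.
move=> g_O g_su; split => //; exists (conjT g); split.
  by move=> i j; apply: (order_conj B_order).
by split => //; apply: SU2_conjT_mul.
Qed.

Lemma loc_vmul q v g j : prime q -> in_M2O B g -> (forall i, loc_at B q (v i)) ->
  loc_at B q (vmul a b v g j).
Proof.
by move=> q_pr g_O v_loc; rewrite /vmul big_ord2; apply: locD => //; apply: locMl.
Qed.

Lemma loc_unit_row q i k : prime q -> loc_at B q (unit_row i k).
Proof.
move=> q_pr; apply: loc_lattice => //; rewrite /unit_row; case: (k == i).
  exact: (order1 B_order).
exact: lattice0.
Qed.

Lemma M2O_of_stab g : (forall q, prime q -> stab_loc a b B q g) -> in_M2O B g.
Proof.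
move=> g_stab i j; apply: lattice_of_loc => q q_pr.
have [stab_g _] := g_stab q q_pr; rewrite -(vmul_unit_row a b i g j).
by apply: stab_g => k; apply: loc_unit_row.
Qed.

Lemma Gamma1_of_SU2_GL2O g : in_SU2 a b g -> in_GL2O a b B g -> in_Gamma1 a b B g.
Proof.
move=> g_su [g_O [h [h_O [_ hg1]]]]; split; first by exists 1.
move=> q q_pr; split=> [v v_loc j|w w_loc]; first exact: loc_vmul.
exists (vmul a b w h); split=> [i|j]; first exact: loc_vmul.
by rewrite vmulA (eq_vmulr a b _ hg1) vmul_scalr scale1r.
Qed.

(* The right action of g is onto (O_(q))^2, and the preimage of a unit row
   is the corresponding row of the inverse g^-1 = mu^-1 conj(g)^T. *)
Lemma Gamma1_inv_M2O g mu : in_Gamma1 a b B g -> mu != 0 -> simil a b g mu ->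
  forall i j, in_lattice B (mu^-1 *: qconj (g j i)).
Proof.
move=> [_ g_stab] mu_neq0 g_mu i j; apply: lattice_of_loc => q q_pr.
have [_ onto_g] := g_stab q q_pr.
have [v [v_loc vg]] := onto_g (unit_row i) (fun k => loc_unit_row i k q_pr).
suff -> : mu^-1 *: qconj (g j i) = v j by apply: v_loc.
have <- : mu *: v j = qconj (g j i).
  by rewrite -(vmul_scalr a b) -(eq_vmulr a b _ g_mu) -vmulA (eq_vmull a b vg) vmul_unit_row.
by rewrite scalerA mulVf ?scale1r.
Qed.

Lemma SU2_GL2O_of_Gamma1 g : in_Gamma1 a b B g -> in_SU2 a b g /\ in_GL2O a b B g.
Proof.
move=> g_Gamma; have [[mu [mu_neq0 g_mu]] g_stab] := g_Gamma.
have g_O := M2O_of_stab g_stab.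
have gV_O := Gamma1_inv_M2O g_Gamma mu_neq0 g_mu.
have norm_int x : in_lattice B x -> qnorm a b x \is a Num.int.
  by move=> x_O; have [] := order_trace_norm_int B_order x_O.
have mu_int : mu \is a Num.int.
  by rewrite (simil_norm_row0 g_mu) rpredD ?norm_int.
have muV_int : mu^-1 \is a Num.int.
  have -> : mu^-1 = qnorm a b (mu^-1 *: qconj (g ord0 ord0)) +
                    qnorm a b (mu^-1 *: qconj (g ord0 ord_max)).
    by rewrite !qnormZ !qnorm_conj -mulrDr -(simil_norm_row0 g_mu) expr2 -mulrA mulVf ?mulr1.
  by rewrite rpredD ?norm_int.
have mu_gt0 : 0 < mu.
  by rewrite lt0r mu_neq0 (simil_norm_row0 g_mu) addr_ge0 ?qnorm_ge0.
have mu1 : mu = 1 by apply: Qint_unit_gt0.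
have g_su : in_SU2 a b g by rewrite /in_SU2 -mu1.
by split => //; apply: GL2O_of_SU2.
Qed.

Lemma SU2_GL2O_of_GU2O g : in_GU2O a b B g -> in_SU2 a b g /\ in_GL2O a b B g.
Proof.
move=> [_ [g_O [mu [g_mu [mu1|muN1]]]]].
  have g_su : in_SU2 a b g by rewrite /in_SU2 -mu1.
  by split; last exact: GL2O_of_SU2.
have := simil_norm_row0 g_mu; rewrite muN1.
have := qnorm_ge0 a_lt0 b_lt0 (g ord0 ord0); have := qnorm_ge0 a_lt0 b_lt0 (g ord0 ord_max).
lra.
Qed.

End Unitary.

Lemma GU2O_of_SU2 a b B g : in_SU2 a b g -> in_M2O B g -> in_GU2O a b B g.
Proof. by move=> g_su g_O; split; [exists 1 | split=> //; exists 1; split=> //; left]. Qed.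

Theorem lemma5p2 (p : nat) (a b : rat) (B : 'I_4 -> quat) :
  prime p -> a != 0 -> b != 0 ->
  ramified_exactly_at_p_infty a b p ->
  is_maximal_order a b B ->
  forall g : M2,
    (in_Gamma1 a b B g <-> in_SU2 a b g /\ in_GL2O a b B g) /\
    (in_SU2 a b g /\ in_GL2O a b B g <-> in_GU2O a b B g).
Proof.
move=> _ _ _ [[a_lt0 b_lt0] _] [B_order _] g.
split; split.
- exact: SU2_GL2O_of_Gamma1.
- by case; apply: Gamma1_of_SU2_GL2O.
- by case=> g_su [g_O _]; apply: GU2O_of_SU2.
- exact: SU2_GL2O_of_GU2O.
Qed.
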